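(* In the setting below, suppose that $$\sum_{t\in\mathcal K}\hat d_t^\top Z^\top f(x_t)\le \sum_{t\in\mathcal K^c}\|Z^\top f(x_t)\|_2\quad\text{for all } Z\in\mathbb{R}^{m\times n}.$$ Then $\bar A$ is the unique global minimizer of $\min_{A\in\mathbb{R}^{n\times m}}\sum_{t=0}^{T-1}\|(\bar A-A)f(x_t)+\bar d_t\|_2$ if and only if for every nonzero $Z\in\mathbb{R}^{m\times n}$, $$\sum_{t\in\mathcal K}\hat d_t^\top Z^\top f(x_t)=\sum_{t\in\mathcal K^c}\|Z^\top f(x_t)\|_2\ \Longrightarrow\ \sum_{t\in\mathcal K}\big|\hat d_t^\top Z^\top f(x_t)\big|<\sum_{t\in\mathcal K}\|Z^\top f(x_t)\|_2 .$$
   Context: $f:\mathbb{R}^n\to\mathbb{R}^m$ is given, $\bar A\in\mathbb{R}^{n\times m}$, $\bar d_0,\dots,\bar d_{T-1}\in\mathbb{R}^n$, and $x_0=0_n$, $x_{t+1}=\bar A f(x_t)+\bar d_t$ for $t=0,\dots,T-1$. $\mathcal K:=\{t\in\{0,\dots,T-1\}:\bar d_t\ne 0\}$, $\mathcal K^c:=\{0,\dots,T-1\}\setminus\mathcal K$, $\hat d_t:=\bar d_t/\|\bar d_t\|_2$ for $t\in\mathcal K$. *)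

From HB Require Import structures.
From mathcomp Require Import all_boot all_order all_algebra.
From mathcomp Require Import reals.
Set Implicit Arguments. Unset Strict Implicit. Unset Printing Implicit Defensive.
Import Order.TTheory GRing.Theory Num.Theory.
Local Open Scope ring_scope.

Definition norm2 {R : realType} {k : nat} (v : 'cV[R]_k) : R :=
  Num.sqrt (\sum_(i < k) v i 0 ^+ 2).

Fixpoint traj {R : realType} {n m : nat} (f : 'cV[R]_n -> 'cV[R]_m)
  (Abar : 'M[R]_(n, m)) (d : nat -> 'cV[R]_n) (t : nat) : 'cV[R]_n :=
  match t with
  | 0 => 0
  | t'.+1 => Abar *m f (traj f Abar d t') + d t'
  end.

Definition dhat {R : realType} {n : nat} (v : 'cV[R]_n) : 'cV[R]_n :=
  (norm2 v)^-1 *: v.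

Definition dotv {R : realType} {n : nat} (u w : 'cV[R]_n) : R := (u^T *m w) 0 0.

Definition objective {R : realType} {n m : nat} (f : 'cV[R]_n -> 'cV[R]_m)
  (Abar : 'M[R]_(n, m)) (d : nat -> 'cV[R]_n) (T : nat) (A : 'M[R]_(n, m)) : R :=
  \sum_(t < T) norm2 ((Abar - A) *m f (traj f Abar d t) + d t).

Definition unique_global_minimizer {X : Type} {R : realType} (g : X -> R) (B : X) : Prop :=
  (forall A, g B <= g A) /\ (forall A, (forall C, g A <= g C) -> A = B).

From HB Require Import structures.
From mathcomp Require Import all_boot all_order all_algebra.
From mathcomp Require Import reals.
From mathcomp Require Import ring lra.
Import Order.TTheory GRing.Theory Num.Theory.
(* Write A = Abar + V and u_t = f(x_t).  By Cauchy-Schwarz every residual obeys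
   ||d_t - V u_t|| >= ||d_t|| - <dhat_t, V u_t> for d_t <> 0, with equality only
   if V u_t is collinear with d_t, i.e. |<dhat_t, V u_t>| = ||V u_t||.  Summing,
   cost V >= cost 0 - sum_K <dhat_t, V u_t> + sum_K^c ||V u_t||, so the hypothesis
   makes V = 0 a global minimizer, and a second minimizer V <> 0 must turn both
   inequalities into equalities, which the criterion forbids.  Conversely, if
   V <> 0 balances the two sums and is collinear with every d_t, then the cost is
   affine with zero slope on a segment [0, s V], so s V is another minimizer. *)

Set Implicit Arguments.
Unset Strict Implicit.
Unset Printing Implicit Defensive.
Local Open Scope ring_scope.

Lemma ler_sum_eq (R : numDomainType) (I : finType) (P : pred I) (F G : I -> R) :
  (forall i, P i -> F i <= G i) ->
  \sum_(i | P i) F i = \sum_(i | P i) G i -> forall i, P i -> F i = G i.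
Proof.
move=> leFG /eqP; have [_ ->] := leif_sum (fun i Pi => leif_eq (leFG i Pi)).
by move=> /forall_inP eqFG i /eqFG /eqP.
Qed.

Lemma exists_small_scale (R : realFieldType) (I : finType) (P : pred I) (a b : I -> R) :
  (forall i, P i -> 0 < b i) -> exists2 s : R, 0 < s & forall i, P i -> s * a i <= b i.
Proof.
move=> b_gt0; set S := \sum_(i | P i) `|a i| / b i.
have S_ge0 : 0 <= S by apply: sumr_ge0 => i Pi; rewrite divr_ge0 // ltW // b_gt0.
exists (1 + S)^-1 => [|i Pi]; first by rewrite invr_gt0; lra.
have bi_gt0 := b_gt0 i Pi.
have ai_le : a i <= S * b i.
  have -> : S = `|a i| / b i + \sum_(j | P j && (j != i)) `|a j| / b j.
    by rewrite /S (bigD1 i).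
  have : 0 <= \sum_(j | P j && (j != i)) `|a j| / b j.
    by apply: sumr_ge0 => j /andP[Pj _]; rewrite divr_ge0 // ltW // b_gt0.
  have := ler_norm (a i); rewrite mulrDl divfK ?gt_eqF //; nra.
rewrite -ler_pdivlMl ?invr_gt0 ?invrK; last lra.
rewrite (le_trans ai_le) // ler_wpM2r ?ltW //; lra.
Qed.

Section EuclideanNorm.
Variables (R : realType) (k : nat).
Implicit Types (u v w d : 'cV[R]_k) (s : R).

Lemma dotvE u w : dotv u w = \sum_(i < k) u i 0 * w i 0.
Proof. by rewrite /dotv mxE; apply: eq_bigr => i _; rewrite mxE. Qed.

Lemma dotvC u w : dotv u w = dotv w u.
Proof. by rewrite !dotvE; apply: eq_bigr => i _; rewrite mulrC. Qed.

Lemma dotvDr u v w : dotv u (v + w) = dotv u v + dotv u w.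
Proof. by rewrite !dotvE -big_split; apply: eq_bigr => i _; rewrite mxE mulrDr. Qed.

Lemma dotvZr u s v : dotv u (s *: v) = s * dotv u v.
Proof. by rewrite !dotvE mulr_sumr; apply: eq_bigr => i _; rewrite mxE mulrCA. Qed.

Lemma dotvNr u v : dotv u (- v) = - dotv u v.
Proof. by rewrite -scaleN1r dotvZr mulN1r. Qed.

Lemma dotvBr u v w : dotv u (v - w) = dotv u v - dotv u w.
Proof. by rewrite dotvDr dotvNr. Qed.

Lemma dotvZl u s v : dotv (s *: u) v = s * dotv u v.
Proof. by rewrite dotvC dotvZr dotvC. Qed.

Lemma dotvBl u v w : dotv (v - w) u = dotv v u - dotv w u.
Proof. by rewrite dotvC dotvBr !(dotvC u). Qed.

Lemma dotvv_ge0 v : 0 <= dotv v v.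
Proof. by rewrite dotvE; apply: sumr_ge0 => i _; rewrite -expr2 sqr_ge0. Qed.

Lemma norm2E v : norm2 v = Num.sqrt (dotv v v).
Proof. by rewrite /norm2 dotvE; congr Num.sqrt; apply: eq_bigr => i _; rewrite expr2. Qed.

Lemma norm2_ge0 v : 0 <= norm2 v.
Proof. by rewrite norm2E sqrtr_ge0. Qed.

Lemma norm2_sqr v : norm2 v ^+ 2 = dotv v v.
Proof. by rewrite norm2E sqr_sqrtr // dotvv_ge0. Qed.

Lemma norm2_eq_sqr v e : norm2 v ^+ 2 = e ^+ 2 -> norm2 v = `|e|.
Proof. by move=> h; rewrite -sqrtr_sqr -h sqrtr_sqr ger0_norm // norm2_ge0. Qed.

Lemma norm2Z s v : norm2 (s *: v) = `|s| * norm2 v.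
Proof. by rewrite !norm2E dotvZl dotvZr mulrA -expr2 sqrtrM ?sqr_ge0 // sqrtr_sqr. Qed.

Lemma norm2N v : norm2 (- v) = norm2 v.
Proof. by rewrite -scaleN1r norm2Z normrN1 mul1r. Qed.

Lemma norm2_0 : norm2 (0 : 'cV[R]_k) = 0.
Proof. by rewrite -(scale0r 0) norm2Z normr0 mul0r. Qed.

Lemma norm2_eq0 d : (norm2 d == 0) = (d == 0).
Proof.
apply/eqP/eqP => [|->]; last by rewrite norm2_0.
move=> /eqP; rewrite sqrtr_eq0 => sum_le0.
have sqr_d0 : \sum_(i < k) d i 0 ^+ 2 = 0.
  by apply/le_anti; rewrite sum_le0 sumr_ge0 // => i _; exact: sqr_ge0.
apply/matrixP => i j; rewrite ord1 mxE; apply/eqP; rewrite -sqrf_eq0.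
by apply/eqP; exact: (psumr_eq0P (fun i _ => sqr_ge0 (d i 0)) sqr_d0).
Qed.

Lemma norm2_gt0 d : d != 0 -> 0 < norm2 d.
Proof. by rewrite lt_def norm2_eq0 norm2_ge0 andbT. Qed.

(* Lagrange's identity [2 (|u|^2 |v|^2 - <u,v>^2) = sum_ij (u_i v_j - u_j v_i)^2]. *)
Lemma dotv_sqr_le u v : dotv u v ^+ 2 <= dotv u u * dotv v v.
Proof.
rewrite !dotvE.
set Suu := \sum_(i < k) u i 0 * u i 0; set Svv := \sum_(i < k) v i 0 * v i 0.
set Suv := \sum_(i < k) u i 0 * v i 0.
have lagrange : \sum_(i < k) \sum_(j < k) (u i 0 * v j 0 - u j 0 * v i 0) ^+ 2
    = 2 * (Suu * Svv - Suv ^+ 2).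
  have prod_sum (F G : 'I_k -> R) :
      \sum_(i < k) \sum_(j < k) F i * G j = (\sum_i F i) * (\sum_j G j).
    by rewrite big_distrl; apply: eq_bigr => i _; rewrite big_distrr.
  rewrite (eq_bigr (fun i => \sum_(j < k) (u i 0 * u i 0 * (v j 0 * v j 0))
      + \sum_(j < k) (v i 0 * v i 0 * (u j 0 * u j 0))
      - 2 * \sum_(j < k) (u i 0 * v i 0 * (u j 0 * v j 0)))); last first.
    move=> i _; rewrite mulr_sumr -big_split -sumrB /=.
    by apply: eq_bigr => j _; ring.
  rewrite sumrB big_split -mulr_sumr /= !prod_sum -/Suu -/Svv -/Suv.
  ring.
have : 0 <= \sum_(i < k) \sum_(j < k) (u i 0 * v j 0 - u j 0 * v i 0) ^+ 2.
  by apply: sumr_ge0 => i _; apply: sumr_ge0 => j _; exact: sqr_ge0.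
rewrite lagrange; lra.
Qed.

Lemma normr_dotv_le u v : `|dotv u v| <= norm2 u * norm2 v.
Proof.
rewrite !norm2E -sqrtrM ?dotvv_ge0 // -sqrtr_sqr.
by rewrite ler_sqrt ?dotv_sqr_le // mulr_ge0 // dotvv_ge0.
Qed.

Lemma norm2B_sqr d w :
  norm2 (d - w) ^+ 2 = norm2 d ^+ 2 - 2 * dotv d w + norm2 w ^+ 2.
Proof. by rewrite !norm2_sqr !(dotvBl, dotvBr) (dotvC w d); ring. Qed.

Section UnitDirection.
Variable d : 'cV[R]_k.
Hypothesis d_neq0 : d != 0.

Let d_gt0 : 0 < norm2 d. Proof. exact: norm2_gt0. Qed.

Lemma dotv_dhatl w : dotv d w = norm2 d * dotv (dhat d) w.
Proof. by rewrite /dhat dotvZl mulrA mulfV ?mul1r // gt_eqF. Qed.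

Lemma norm2_dhat : norm2 (dhat d) = 1.
Proof. by rewrite /dhat norm2Z ger0_norm ?invr_ge0 ?norm2_ge0 // mulVf // gt_eqF. Qed.

Lemma normr_dotv_dhat_le w : `|dotv (dhat d) w| <= norm2 w.
Proof. by rewrite (le_trans (normr_dotv_le _ _)) // norm2_dhat mul1r. Qed.

Lemma ler_norm2B_dhat w : norm2 d - dotv (dhat d) w <= norm2 (d - w).
Proof.
have dhat_d : dotv (dhat d) d = norm2 d.
  by rewrite /dhat dotvZl -norm2_sqr expr2 mulrA mulVf ?mul1r // gt_eqF.
by rewrite -dhat_d -dotvBr (le_trans (ler_norm _)) // normr_dotv_dhat_le.
Qed.

Lemma normr_dotv_dhat_eq w :
  norm2 (d - w) = norm2 d - dotv (dhat d) w -> `|dotv (dhat d) w| = norm2 w.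
Proof.
move=> eq_dw; apply/esym/norm2_eq_sqr; move: eq_dw => /(congr1 (fun x => x ^+ 2)).
by rewrite norm2B_sqr dotv_dhatl; lra.
Qed.

Lemma norm2BZ_dhat w s : `|dotv (dhat d) w| = norm2 w ->
  `|s| * norm2 w <= norm2 d -> norm2 (d - s *: w) = norm2 d - s * dotv (dhat d) w.
Proof.
move=> collinear small; set c := dotv (dhat d) w.
have sc_le : s * c <= norm2 d.
  by rewrite (le_trans (ler_norm _)) // normrM collinear.
rewrite -[RHS]ger0_norm ?subr_ge0 //; apply: norm2_eq_sqr.
rewrite norm2B_sqr dotvZr dotv_dhatl norm2Z -/c exprMn -collinear !real_normK ?num_real // -/c.
ring.
Qed.

End UnitDirection.

End EuclideanNorm.

Lemma unique_global_minimizer_shift (V : zmodType) (R : realType) (g h : V -> R) (B : V) :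
  (forall A, h A = g (A - B)) ->
  unique_global_minimizer h B <-> unique_global_minimizer g 0.
Proof.
move=> hE; split=> -[min uniq]; split.
- by move=> A; have := min (A + B); rewrite !hE subrr addrK.
- move=> A minA; apply: (addIr B); rewrite add0r; apply: uniq => C.
  by rewrite !hE addrK; exact: minA.
- by move=> A; rewrite !hE subrr.
- move=> A minA; apply/eqP; rewrite -subr_eq0; apply/eqP/uniq => C.
  by have := minA (C + B); rewrite !hE addrK.
Qed.

Section LeastAbsoluteDeviations.
Variables (R : realType) (n m : nat) (I : finType).
Variables (u : I -> 'cV[R]_m) (d : I -> 'cV[R]_n).
Implicit Types V W : 'M[R]_(n, m).

Definition lad_cost V := \sum_i norm2 (d i - V *m u i).

Definition dhat_sum W := \sum_(i | d i != 0) dotv (dhat (d i)) (W *m u i).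

Definition null_norm_sum W := \sum_(i | d i == 0) norm2 (W *m u i).

Lemma lad_costE V :
  lad_cost V = \sum_(i | d i != 0) norm2 (d i - V *m u i) + null_norm_sum V.
Proof.
rewrite /lad_cost (bigID (fun i => d i == 0)) addrC /=; congr (_ + _).
by apply: eq_bigr => i /eqP ->; rewrite sub0r norm2N.
Qed.

Lemma lad_cost0 : lad_cost 0 = \sum_(i | d i != 0) norm2 (d i).
Proof.
rewrite lad_costE.
have -> : null_norm_sum 0 = 0 by apply: big1 => i _; rewrite mul0mx norm2_0.
by rewrite addr0; apply: eq_bigr => i _; rewrite mul0mx subr0.
Qed.

Lemma lad_cost_ge V : lad_cost 0 - dhat_sum V + null_norm_sum V <= lad_cost V.
Proof.
rewrite lad_cost0 lad_costE lerD2r /dhat_sum -sumrB.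
by apply: ler_sum => i /ler_norm2B_dhat.
Qed.

Lemma lad_cost_eq V :
  lad_cost V = lad_cost 0 - dhat_sum V + null_norm_sum V ->
  forall i, d i != 0 -> `|dotv (dhat (d i)) (V *m u i)| = norm2 (V *m u i).
Proof.
rewrite lad_cost0 lad_costE /dhat_sum -sumrB => /addIr /esym eq_sums i Ki.
apply/normr_dotv_dhat_eq/esym => //.
exact: (ler_sum_eq (fun j Kj => ler_norm2B_dhat Kj _) eq_sums).
Qed.

Lemma lad_cost_scale V :
  (forall i, d i != 0 -> `|dotv (dhat (d i)) (V *m u i)| = norm2 (V *m u i)) ->
  exists2 s, 0 < s & lad_cost (s *: V) = lad_cost 0 - s * (dhat_sum V - null_norm_sum V).
Proof.
move=> collinear.
have [s s_gt0 small] := exists_small_scale (fun i => norm2 (V *m u i))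
  (fun i => @norm2_gt0 _ _ (d i)).
exists s => //; rewrite lad_costE lad_cost0 /dhat_sum.
rewrite (eq_bigr (fun i => norm2 (d i) - s * dotv (dhat (d i)) (V *m u i))); last first.
  move=> i Ki; rewrite -scalemxAl norm2BZ_dhat ?collinear //.
  by rewrite (ger0_norm (ltW s_gt0)) small.
have -> : null_norm_sum (s *: V) = s * null_norm_sum V.
  rewrite mulr_sumr; apply: eq_bigr => i _.
  by rewrite -scalemxAl norm2Z (ger0_norm (ltW s_gt0)).
by rewrite sumrB -mulr_sumr; ring.
Qed.

Lemma lad_unique_minimizer0P :
  (forall W, dhat_sum W <= null_norm_sum W) ->
  unique_global_minimizer lad_cost 0 <->
  (forall W, W != 0 -> dhat_sum W = null_norm_sum W ->
     \sum_(i | d i != 0) `|dotv (dhat (d i)) (W *m u i)|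
       < \sum_(i | d i != 0) norm2 (W *m u i)).
Proof.
move=> dhat_sum_le; split.
- case=> min0 uniq W W_neq0 balanced.
  have sum_le : \sum_(i | d i != 0) `|dotv (dhat (d i)) (W *m u i)|
      <= \sum_(i | d i != 0) norm2 (W *m u i).
    by apply: ler_sum => i /normr_dotv_dhat_le.
  rewrite lt_def sum_le andbT; apply: contra W_neq0 => /eqP/esym eq_sums.
  have [s s_gt0 cost_sW] :=
    lad_cost_scale (ler_sum_eq (fun i Ki => normr_dotv_dhat_le Ki _) eq_sums).
  have : s *: W = 0.
    by apply: uniq => C; rewrite cost_sW balanced subrr mulr0 subr0.
  by move/eqP; rewrite scaler_eq0 gt_eqF.
- move=> crit; split=> [V | V minV].
  + by have := lad_cost_ge V; have := dhat_sum_le V; lra.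
  + apply/eqP; apply: contraT => V_neq0.
    have cost_le := minV 0; have cost_ge := lad_cost_ge V; have := dhat_sum_le V.
    move=> dhat_sum_leV; have balanced : dhat_sum V = null_norm_sum V by lra.
    have cost_eq : lad_cost V = lad_cost 0 - dhat_sum V + null_norm_sum V by lra.
    by have := crit V V_neq0 balanced; rewrite (eq_bigr _ (lad_cost_eq cost_eq)) ltxx.
Qed.

End LeastAbsoluteDeviations.

Theorem theorem2 (R : realType) (n m T : nat) (f : 'cV[R]_n -> 'cV[R]_m)
  (Abar : 'M[R]_(n, m)) (d : nat -> 'cV[R]_n) :
  let x := traj f Abar d in
  (forall Z : 'M[R]_(m, n),
     \sum_(t < T | d t != 0) dotv (dhat (d t)) (Z^T *m f (x t))
     <= \sum_(t < T | d t == 0) norm2 (Z^T *m f (x t))) ->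
  (unique_global_minimizer (objective f Abar d T) Abar <->
   (forall Z : 'M[R]_(m, n), Z != 0 ->
      \sum_(t < T | d t != 0) dotv (dhat (d t)) (Z^T *m f (x t))
        = \sum_(t < T | d t == 0) norm2 (Z^T *m f (x t)) ->
      \sum_(t < T | d t != 0) `|dotv (dhat (d t)) (Z^T *m f (x t))|
        < \sum_(t < T | d t != 0) norm2 (Z^T *m f (x t)))).
Proof.
move=> x opt0.
pose u (t : 'I_T) := f (x t); pose d' (t : 'I_T) := d t.
have objectiveE A : objective f Abar d T A = lad_cost u d' (A - Abar).
  by apply: eq_bigr => t _; rewrite addrC -opprB mulNmx.
rewrite (unique_global_minimizer_shift objectiveE) lad_unique_minimizer0P.
- split=> crit Z.
  + by rewrite -trmx_eq0; exact: crit.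
  + by rewrite -[Z]trmxK trmx_eq0; exact: crit.
- by move=> W; rewrite -[W]trmxK; exact: opt0.
Qed.
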